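(* Let $K$ be a field, $S=K[x_1,\ldots,x_n]$, and $\alpha=(k_1,\ldots,k_n)\in\mathbb N^n$. A monomial ideal $I\subset S$ has linear quotients if and only if its expansion $I^\alpha\subset S^\alpha$ has linear quotients.
   Context: $\mathbb N$ denotes the positive integers. For $\alpha=(k_1,\ldots,k_n)\in\mathbb N^n$ let $S^\alpha=K[x_{ij}:1\le i\le n,\ 1\le j\le k_i]$ and $P_i=(x_{i1},\ldots,x_{ik_i})\subset S^\alpha$. If $I$ is a monomial ideal with minimal monomial generating set $G(I)=\{\mathbf x^{\mathbf a_1},\ldots,\mathbf x^{\mathbf a_r}\}$, its expansion is $I^\alpha=\sum_{l=1}^r P_1^{\mathbf a_l(1)}\cdots P_n^{\mathbf a_l(n)}\subset S^\alpha$. A monomial ideal $I$ has linear quotients with respect to an ordering $u_1,\ldots,u_r$ of its minimal monomial generators if for all $j=2,\ldots,r$ the colon ideal $(u_1,\ldots,u_{j-1}):(u_j)$ is generated by variables; $I$ has linear quotients if it has linear quotients with respect to some ordering of $G(I)$. *)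

From HB Require Import structures.
From mathcomp Require Import all_boot all_order all_algebra.
From mathcomp Require Import mpoly.
Set Implicit Arguments. Unset Strict Implicit. Unset Printing Implicit Defensive.
Import GRing.Theory.
Local Open Scope ring_scope.

Section Ideals.
Variables (R : comNzRingType) (n : nat).
Local Notation S := {mpoly R[n]}.

Definition ideal_gen (G : S -> Prop) : S -> Prop :=
  fun f => exists s : seq (S * S),
    (forall p, p \in s -> G p.2) /\ f = \sum_(p <- s) p.1 * p.2.

Definition unit_ideal : S -> Prop := ideal_gen (fun g => g = 1).

Definition ideal_mul (I J : S -> Prop) : S -> Prop :=
  ideal_gen (fun h => exists f g, I f /\ J g /\ h = f * g).

Definition ideal_pow (I : S -> Prop) (e : nat) : S -> Prop :=
  iter e (ideal_mul I) unit_ideal.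

Definition monomial_ideal (I : S -> Prop) : Prop :=
  forall f, I f <-> ideal_gen (fun g => I g /\ exists m, g = 'X_[m]) f.

Definition rdivides (u v : S) : Prop := exists q, v = q * u.

(* x^m belongs to the minimal monomial generating set G(I):
   x^m is in I and no other monomial of I divides it. *)
Definition mingen (I : S -> Prop) (m : 'X_{1..n}) : Prop :=
  I 'X_[m] /\
  forall m' : 'X_{1..n}, I 'X_[m'] -> rdivides 'X_[m'] 'X_[m] -> m' = m.

Definition colon (J : S -> Prop) (u : S) : S -> Prop := fun f => J (f * u).

Definition gen_by_vars (J : S -> Prop) : Prop :=
  exists V : seq 'I_n,
    forall f, J f <-> ideal_gen (fun g => exists i, i \in V /\ g = 'X_i) f.

Definition mon_ideal_of (s : seq 'X_{1..n}) : S -> Prop :=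
  ideal_gen (fun g => exists t, t \in s /\ g = 'X_[t]).

(* The ordering s = u_1,...,u_r gives linear quotients: for every j >= 2,
   (u_1,...,u_{j-1}) : (u_j) is generated by variables. *)
Definition linear_quotients_wrt (s : seq 'X_{1..n}) : Prop :=
  forall (pre post : seq 'X_{1..n}) (u : 'X_{1..n}),
    s = pre ++ u :: post -> pre <> [::] ->
    gen_by_vars (colon (mon_ideal_of pre) 'X_[u]).

Definition has_linear_quotients (I : S -> Prop) : Prop :=
  exists s : seq 'X_{1..n},
    [/\ uniq s, (forall m, m \in s <-> mingen I m) & linear_quotients_wrt s].

End Ideals.

Section Expansion.
Variables (R : comNzRingType) (n : nat) (k : 'I_n -> nat).

(* index type of the variables x_{ij} of S^alpha, 1 <= i <= n, 1 <= j <= k_i *)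
Definition expvar := {i : 'I_n & 'I_(k i)}.

(* S^alpha = R[x_{ij}], variables enumerated by enum_rank *)
Definition Salpha := {mpoly R[#|{: expvar}|]}.

Definition xvar (i : 'I_n) (j : 'I_(k i)) : Salpha :=
  'X_(enum_rank (Tagged (fun i => 'I_(k i)) j : expvar)).

Definition Pideal (i : 'I_n) : Salpha -> Prop :=
  ideal_gen (fun g => exists j : 'I_(k i), g = @xvar i j).

Definition Pprod (a : 'X_{1..n}) : Salpha -> Prop :=
  foldr (fun i J => ideal_mul (ideal_pow (Pideal i) (a i)) J)
        (unit_ideal (R:=R) (n:=#|{: expvar}|)) (enum 'I_n).

Definition expansion (I : {mpoly R[n]} -> Prop) : Salpha -> Prop :=
  ideal_gen (fun f => exists a, mingen I a /\ Pprod a f).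

End Expansion.

Arguments expansion {R n} k I.

(* A monomial [b] of S^alpha lies in I^alpha iff its contraction [x_ij |-> x_i] lies in I,
   so G(I^alpha) is the disjoint union of the contraction fibers over G(I).  A colon ideal
   (u_1, ..., u_j-1) : u_j of monomials is generated by variables iff for every earlier
   u_l some x_i dividing u_l / gcd(u_l, u_j) lies in it.  Listing the fibers in the order
   of G(I), each in decreasing monomial order, this criterion holds against earlier fibers
   by lifting the one for I, and within a fiber by moving one unit of degree of u_j to an
   earlier variable of the same block.  Conversely, the monomials of G(I^alpha) in the
   variables x_i1 form a copy of G(I), and a subsequence closed under these moves
   inherits linear quotients. *)

From HB Require Import structures.
From mathcomp Require Import all_boot all_order all_algebra.
From mathcomp Require Import mpoly.
From mathcomp Require Import zify.
Set Implicit Arguments. Unset Strict Implicit. Unset Printing Implicit Defensive.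
Import GRing.Theory Order.TTheory.

Section IdealGen.
Variables (R : comNzRingType) (N : nat).
Local Open Scope ring_scope.
Local Notation S := {mpoly R[N]}.

Lemma ideal_gen_in (P : S -> Prop) g : P g -> ideal_gen P g.
Proof.
move=> Pg; exists [:: (1, g)]; split; last by rewrite big_seq1 mul1r.
by move=> p; rewrite inE => /eqP ->.
Qed.

Lemma ideal_gen0 (P : S -> Prop) : ideal_gen P 0.
Proof. by exists [::]; rewrite big_nil. Qed.

Lemma ideal_genD (P : S -> Prop) f g :
  ideal_gen P f -> ideal_gen P g -> ideal_gen P (f + g).
Proof.
move=> [s1 [H1 ->]] [s2 [H2 ->]]; exists (s1 ++ s2); split; last by rewrite big_cat.
by move=> p; rewrite mem_cat => /orP [/H1|/H2].
Qed.

Lemma ideal_genMl (P : S -> Prop) c f : ideal_gen P f -> ideal_gen P (c * f).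
Proof.
move=> [s [H ->]]; exists [seq (c * p.1, p.2) | p <- s]; split.
  by move=> p /mapP [q qs ->] /=; apply: H.
by rewrite big_map mulr_sumr; apply: eq_bigr => p _; rewrite mulrA.
Qed.

Lemma ideal_gen_sum (P : S -> Prop) (I : eqType) (r : seq I) (F : I -> S) :
  (forall i, i \in r -> ideal_gen P (F i)) -> ideal_gen P (\sum_(i <- r) F i).
Proof.
elim: r => [|x r IHr] H; first by rewrite big_nil; apply: ideal_gen0.
rewrite big_cons; apply: ideal_genD; first by apply: H; rewrite mem_head.
by apply: IHr => i ri; apply: H; rewrite inE ri orbT.
Qed.

Lemma ideal_gen_min (P Q : S -> Prop) f :
  (forall g, P g -> ideal_gen Q g) -> ideal_gen P f -> ideal_gen Q f.
Proof.
by move=> PQ [s [Hs ->]]; apply: ideal_gen_sum => p ps; apply/ideal_genMl/PQ/Hs.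
Qed.

Lemma ideal_gen_ext (P Q : S -> Prop) f :
  (forall g, P g <-> Q g) -> ideal_gen P f <-> ideal_gen Q f.
Proof. by move=> PQ; split; apply: ideal_gen_min => g /PQ; apply: ideal_gen_in. Qed.

Lemma unit_idealT (f : S) : unit_ideal f.
Proof.
exists [:: (f, 1)]; split; last by rewrite big_seq1 mulr1.
by move=> p; rewrite inE => /eqP ->.
Qed.

Lemma ideal_mul_ext (I I' J J' : S -> Prop) f :
  (forall g, I g <-> I' g) -> (forall g, J g <-> J' g) ->
  ideal_mul I J f <-> ideal_mul I' J' f.
Proof.
move=> II' JJ'; apply: ideal_gen_ext => h.
by split=> [[p [q [/II' Ip [/JJ' Jq ->]]]]|[p [q [/II' Ip [/JJ' Jq ->]]]]]; exists p, q.
Qed.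

End IdealGen.

Section MonomialIdeals.
Variables (R : comNzRingType) (N : nat).
Local Open Scope ring_scope.
Local Notation S := {mpoly R[N]}.
Local Notation T := 'X_{1..N}.

Definition supported_in (U : T -> Prop) (f : S) := forall m, m \in msupp f -> U m.

Definition upset (G : T -> Prop) (m : T) := exists2 t, G t & (t <= m)%MM.

Definition up_closed (U : T -> Prop) := forall x y, U x -> (x <= y)%MM -> U y.

Definition monomial_gens (G : T -> Prop) (g : S) := exists m, G m /\ g = 'X_[m].

Definition minimal (P : T -> Prop) (m : T) :=
  P m /\ forall m', P m' -> (m' <= m)%MM -> m' = m.

Lemma minimal_ext P P' m :
  (forall m, P m <-> P' m) -> minimal P m <-> minimal P' m.
Proof.
by move=> PP'; split=> [[/PP' Pm minm]|[/PP' Pm minm]]; split=> // m' /PP'; apply: minm.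
Qed.

Lemma supported_in_ext U U' f :
  (forall m, U m <-> U' m) -> supported_in U f <-> supported_in U' f.
Proof. by move=> UU'; split=> Uf m /Uf /UU'. Qed.

Lemma supported_inX U m : supported_in U 'X_[m] <-> U m.
Proof.
rewrite /supported_in msuppX; split; first by apply; rewrite mem_head.
by move=> Um m'; rewrite inE => /eqP ->.
Qed.

Lemma upset_id U : up_closed U -> forall m, upset U m <-> U m.
Proof.
move=> Uup m; split=> [[t Ut /(Uup _ _ Ut)] //|Um].
by exists m => //; apply: lepm_refl.
Qed.

Lemma mem_msuppMX (f : S) v m :
  (m \in msupp (f * 'X_[v])) = has (fun m0 => m == (v + m0)%MM) (msupp f).
Proof.
rewrite (perm_mem (msuppMX f v)).
by apply/mapP/hasP => [[m0 f_m0 ->]|[m0 f_m0 /eqP ->]]; exists m0.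
Qed.

Lemma ideal_gen_monomialsP G f :
  ideal_gen (monomial_gens G) f <-> supported_in (upset G) f.
Proof.
split.
  move=> [s [Hs ->]] {f}; elim: s Hs => [|p s IHs] Hs m.
    by rewrite big_nil msupp0.
  rewrite big_cons => /msuppD_le; rewrite mem_cat => /orP [|]; last first.
    by apply: IHs => q qs; apply: Hs; rewrite inE qs orbT.
  have [t [Gt ->]] := Hs p (mem_head _ _).
  by rewrite mem_msuppMX => /hasP [m0 _ /eqP ->]; exists t => //; apply: lem_addr.
move=> Gf; rewrite [f]mpolyE; apply: ideal_gen_sum => m /Gf [t Gt le_tm].
rewrite -(submK le_tm) mpolyXD scalerAl -mul_mpolyC -mulrA.
by do 2!apply: ideal_genMl; apply: ideal_gen_in; exists t.
Qed.

Lemma ideal_gen_up_closedP U f :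
  up_closed U -> ideal_gen (monomial_gens U) f <-> supported_in U f.
Proof.
move=> Uup; rewrite ideal_gen_monomialsP.
by apply: supported_in_ext => m; apply: upset_id.
Qed.

Lemma supported_in_ideal_gen U (P : S -> Prop) f : up_closed U ->
  (forall g, P g -> supported_in U g) -> ideal_gen P f -> supported_in U f.
Proof.
move=> Uup PU Pf; apply/(ideal_gen_up_closedP _ Uup).
by apply: ideal_gen_min Pf => g /PU /(ideal_gen_up_closedP _ Uup).
Qed.

Lemma rdividesX m' m : rdivides 'X_[m'] ('X_[m] : S) <-> (m' <= m)%MM.
Proof.
split=> [[q def_m]|le_m'm]; last by exists 'X_[m - m']; rewrite -mpolyXD submK.
have : m \in msupp ('X_[m] : S) by rewrite msuppX mem_head.
by rewrite def_m mem_msuppMX => /hasP [m0 _ /eqP ->]; apply: lem_addr.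
Qed.

Lemma mingenP (J : S -> Prop) m : mingen J m <-> minimal (fun m => J 'X_[m]) m.
Proof.
by split=> [[Jm minm]|[Jm minm]]; split=> // m' Jm' /rdividesX; apply: minm.
Qed.

Lemma ideal_mul_supportedP UA UB f :
  ideal_mul (supported_in UA) (supported_in UB) f <->
  supported_in (fun m => exists x y, [/\ UA x, UB y & (x + y <= m)%MM]) f.
Proof.
set U := fun m => _.
have Uup : up_closed U.
  by move=> m m' [x [y [Ax By le_m]]] le_mm'; exists x, y; split=> //; apply: lepm_trans le_mm'.
split.
  apply: supported_in_ideal_gen => // g [p [q [Ap [Bq ->]]]] m.
  move=> /msuppM_le /allpairsP [[m1 m2] [/= m1p m2q ->]].
  by exists m1, m2; split; [apply: Ap | apply: Bq | apply: lepm_refl].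
move=> /(ideal_gen_up_closedP _ Uup); apply: ideal_gen_min => g [m [[x [y [Ax By le_m]]] ->]].
rewrite -(submK le_m) mpolyXD; apply/ideal_genMl/ideal_gen_in.
by exists 'X_[x], 'X_[y]; rewrite mpolyXD !supported_inX.
Qed.

Lemma colonX G v f :
  colon (ideal_gen (monomial_gens G)) 'X_[v] f <->
  supported_in (fun m => upset G (v + m)) f.
Proof.
rewrite /colon ideal_gen_monomialsP; split=> Gf m.
  by move=> fm; apply: Gf; rewrite mem_msuppMX; apply/hasP; exists m.
by rewrite mem_msuppMX => /hasP [m0 f_m0 /eqP ->]; apply: Gf.
Qed.

Lemma var_idealP (V : seq 'I_N) f :
  ideal_gen (fun g => exists i, i \in V /\ g = 'X_i) f <->
  supported_in (fun m => exists2 i, i \in V & (U_(i) <= m)%MM) f.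
Proof.
rewrite (@ideal_gen_ext _ _ _ (monomial_gens (fun m => exists2 i, i \in V & m = U_(i)%MM))).
  rewrite ideal_gen_monomialsP; apply: supported_in_ext => m.
  by split=> [[t [i iV ->]]|[i iV le_im]]; [exists i | exists U_(i)%MM => //; exists i].
move=> g; split=> [[i [iV ->]]|[m [[i iV ->] ->]]]; last by exists i.
by exists U_(i)%MM; split=> //; exists i.
Qed.

Lemma gen_by_vars_colonX G v :
  gen_by_vars (colon (ideal_gen (monomial_gens G)) 'X_[v]) <->
  exists V : seq 'I_N,
    forall m, upset G (v + m) <-> exists2 i, i \in V & (U_(i) <= m)%MM.
Proof.
split=> [[V HV]|[V HV]]; exists V.
  by move=> m; have := HV 'X_[m]; rewrite colonX var_idealP !supported_inX.
by move=> f; rewrite colonX var_idealP; apply: supported_in_ext.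
Qed.

End MonomialIdeals.

Lemma cat_eq_cat_cons (A : Type) (s1 s2 pre post : seq A) u :
  s1 ++ s2 = pre ++ u :: post ->
  (exists post1, s1 = pre ++ u :: post1) \/
  (exists2 pre2, pre = s1 ++ pre2 & s2 = pre2 ++ u :: post).
Proof.
elim: s1 pre => [|x s1 IHs1] pre /=; first by right; exists pre.
case: pre => [|y pre] /= [<-] E; first by left; exists s1.
case: (IHs1 _ E) => [[post1 ->]|[pre2 -> ->]]; first by left; exists post1.
by right; exists pre2.
Qed.

Lemma filter_eq_cat_cons (A : Type) (P : pred A) s pre u post :
  filter P s = pre ++ u :: post ->
  exists s1 s2, s = s1 ++ u :: s2 /\ filter P s1 = pre.
Proof.
elim: s pre => [|x s IHs] pre /=; first by case: pre.
case Px: (P x) => E; last first.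
  by have [s1 [s2 [-> <-]]] := IHs _ E; exists (x :: s1), s2; rewrite /= Px.
case: pre E => [|y pre] /= [<-] E; first by exists [::], s.
by have [s1 [s2 [-> <-]]] := IHs _ E; exists (x :: s1), s2; rewrite /= Px.
Qed.

Section LinearQuotients.
Variable N : nat.
Local Notation T := 'X_{1..N}.

(* [x_i] divides [w / gcd(v, w)] and [x_i v] lies in the ideal generated by [s]. *)
Definition lq_witness (s : seq T) (v w : T) :=
  exists i, v i < w i /\ exists2 w', w' \in s & (w' <= v + U_(i))%MM.

Definition lin_quot (s : seq T) (v : T) := forall w, w \in s -> lq_witness s v w.

Definition lq_seq (s : seq T) := forall pre post u, s = pre ++ u :: post -> lin_quot pre u.

Definition has_lq_order (P : T -> Prop) :=
  exists s, [/\ uniq s, forall m, m \in s <-> minimal P m & lq_seq s].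

Lemma has_lq_order_ext P P' :
  (forall m, P m <-> P' m) -> has_lq_order P <-> has_lq_order P'.
Proof.
move=> PP'; split=> [[s [us Hs Ls]]|[s [us Hs Ls]]]; exists s; split=> // m;
  by rewrite Hs (minimal_ext m PP').
Qed.

Lemma lq_witness_sub s s' v w :
  {subset s <= s'} -> lq_witness s v w -> lq_witness s' v w.
Proof. by move=> ss' [i [lt_vw [w' /ss' w's' le_w']]]; exists i; split=> //; exists w'. Qed.

Lemma upset_var_generatedP (pre : seq T) v :
  (exists V : seq 'I_N,
     forall m, upset (fun t => t \in pre) (v + m) <-> exists2 i, i \in V & (U_(i) <= m)%MM)
  <-> lin_quot pre v.
Proof.
split=> [[V HV] w wpre|Hpre].
  have [|i iV] := (HV (w - v)%MM).1.
    exists w => //; apply/mnm_lepP => i; rewrite mnmDE mnmBE; lia.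
  rewrite lep1mP mnmBE => lt_vw; exists i; split; first lia.
  have [|t tpre le_t] := (HV U_(i)%MM).2; last by exists t.
  by exists i => //; apply: lepm_refl.
exists [seq i <- enum 'I_N | has (fun w => (w <= v + U_(i))%MM) pre] => m; split.
  move=> [t tpre /mnm_lepP le_t]; have [i [lt_vt [w' w'pre le_w']]] := Hpre t tpre.
  exists i; first by rewrite mem_filter mem_enum andbT; apply/hasP; exists w'.
  by rewrite lep1mP; have := le_t i; rewrite mnmDE; lia.
move=> [i]; rewrite mem_filter => /andP [/hasP [w wpre /mnm_lepP le_w] _] /mnm_lepP le_im.
exists w => //; apply/mnm_lepP => j; have := le_w j; have := le_im j.
by rewrite !mnmDE; lia.
Qed.

Lemma gen_by_vars_colonP (R : comNzRingType) pre v :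
  gen_by_vars (colon (mon_ideal_of (R:=R) pre) 'X_[v]) <-> lin_quot pre v.
Proof. by rewrite gen_by_vars_colonX upset_var_generatedP. Qed.

Lemma linear_quotients_wrtP (R : comNzRingType) s :
  linear_quotients_wrt R s <-> lq_seq s.
Proof.
split=> H pre post u E.
  by case: pre E => [|w pre] E; [move=> w | apply/(gen_by_vars_colonP R)/(H _ post)].
by move=> _; apply/gen_by_vars_colonP/(H _ _ _ E).
Qed.

Lemma has_linear_quotientsP (R : comNzRingType) (J : {mpoly R[N]} -> Prop) :
  has_linear_quotients J <-> has_lq_order (fun m => J 'X_[m]).
Proof.
split=> [[s [us Hs Ls]]|[s [us Hs Ls]]]; exists s; split=> //;
  by [move=> m; rewrite Hs mingenP | apply/linear_quotients_wrtP: Ls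
     | apply/(linear_quotients_wrtP R)].
Qed.

Lemma lq_seq_cat s1 s2 : lq_seq s1 ->
  (forall pre u post, s2 = pre ++ u :: post -> lin_quot (s1 ++ pre) u) ->
  lq_seq (s1 ++ s2).
Proof.
move=> H1 H2 pre post u E.
by case: (cat_eq_cat_cons E) => [[post1 /H1]|[pre2 -> /H2]].
Qed.

Lemma lq_seq_rcons s u : lq_seq (rcons s u) -> lq_seq s /\ lin_quot s u.
Proof.
move=> H; split; last by apply: (H s [::]); rewrite cats1.
by move=> pre post x E; apply: (H pre (rcons post u)); rewrite E rcons_cat.
Qed.

Lemma lq_seq_filter (P : pred T) s :
  (forall x y, (x <= y)%MM -> P y -> P x) ->
  (forall v w i, P v -> P w -> v i < w i -> P (v + U_(i))%MM) ->
  lq_seq s -> lq_seq (filter P s).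
Proof.
move=> Pdown Padd Hs pre post u E.
have Pu : P u.
  have : u \in filter P s by rewrite E mem_cat mem_head orbT.
  by rewrite mem_filter => /andP [].
have [s1 [s2 [Es <-]]] := filter_eq_cat_cons E.
move=> w; rewrite mem_filter => /andP [Pw ws1].
have [i [lt_uw [w' w's1 le_w']]] := Hs _ _ _ Es w ws1; exists i; split=> //.
exists w' => //; rewrite mem_filter w's1 andbT.
by apply: Pdown le_w' _; apply: Padd Pu Pw lt_uw.
Qed.

End LinearQuotients.

Section LqSeqMap.
Variables (n N : nat) (f : 'X_{1..n} -> 'X_{1..N}) (g : 'I_n -> 'I_N).
Hypothesis f_le : forall x y, (f x <= f y)%MM -> (x <= y)%MM.
Hypothesis fD1 : forall x i, f (x + U_(i))%MM = (f x + U_(g i))%MM.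
Hypothesis f_supp : forall x l, f x l != 0 -> exists i, l = g i.
Hypothesis f_g : forall x i, f x (g i) = x i.

Lemma lq_seq_map s : lq_seq (map f s) -> lq_seq s.
Proof.
move=> H pre post u E w wpre.
have := H (map f pre) (map f post) (f u); rewrite E map_cat => /(_ erefl).
move=> /(_ (f w) (map_f f wpre)) [l [lt_l [_ /mapP [w0 w0pre ->] le_w0]]].
have [i El] : exists i, l = g i by apply: (f_supp (x := w)); move: lt_l; case: (f w l).
move: lt_l le_w0; rewrite El !f_g -fD1 => lt_i /f_le le_w0.
by exists i; split=> //; exists w0.
Qed.

End LqSeqMap.

Section Contraction.
Variables (n : nat) (k : 'I_n -> nat).
Local Notation N := #|{: expvar k}|.
Local Notation T := 'X_{1..N}.

Definition xvar_idx (i : 'I_n) (j : 'I_(k i)) : 'I_N :=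
  enum_rank (Tagged (fun i => 'I_(k i)) j : expvar k).

Definition var_block (l : 'I_N) : 'I_n := tag (enum_val l).

(* The image of [b] under the substitution [x_ij |-> x_i]. *)
Definition contract (b : T) : 'X_{1..n} :=
  [multinom \sum_(l < N | var_block l == i) b l | i < n].

Lemma var_block_idx i (j : 'I_(k i)) : var_block (xvar_idx j) = i.
Proof. by rewrite /var_block /xvar_idx enum_rankK. Qed.

Lemma xvar_idx_block l : exists j : 'I_(k (var_block l)), l = xvar_idx j.
Proof.
rewrite /var_block /xvar_idx; case E: (enum_val l) => [i j] /=; exists j.
by apply: enum_val_inj; rewrite enum_rankK E.
Qed.

Lemma contractE (b : T) i : contract b i = \sum_(l < N | var_block l == i) b l.
Proof. by rewrite mnmE. Qed.

Lemma contractD (b c : T) : contract (b + c)%MM = (contract b + contract c)%MM.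
Proof.
by apply/mnmP => i; rewrite mnmDE !contractE -big_split; apply: eq_bigr => l _; rewrite mnmDE.
Qed.

Lemma contract1 l : contract U_(l)%MM = U_(var_block l)%MM.
Proof.
apply/mnmP => i; rewrite contractE mnm1E big_mkcond (bigD1 l) //= mnm1E eqxx.
rewrite big1 ?addn0 => [|l' /negbTE]; first by case: (var_block l == i).
by rewrite mnm1E eq_sym => ->; case: ifP.
Qed.

Lemma contract_le (b c : T) : (b <= c)%MM -> (contract b <= contract c)%MM.
Proof.
move=> /mnm_lepP le_bc; apply/mnm_lepP => i; rewrite !contractE.
by apply: leq_sum => l _; apply: le_bc.
Qed.

Lemma mdeg_contract (b : T) : mdeg (contract b) = mdeg b.
Proof.
rewrite !mdegE (partition_big var_block xpredT) //=.
by apply: eq_bigr => i _; rewrite contractE.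
Qed.

Lemma contract0 : contract 0%MM = 0%MM.
Proof. by apply/mnmP => i; rewrite contractE mnm0E big1 // => l _; rewrite mnm0E. Qed.

Lemma leq_contract (b : T) l : b l <= contract b (var_block l).
Proof. by rewrite contractE (bigD1 l) //= leq_addr. Qed.

Lemma contract_ltP i (b c : T) :
  contract b i < contract c i -> exists2 l, var_block l = i & b l < c l.
Proof.
move=> lt_bc; have : ~~ [forall l, (var_block l == i) ==> (c l <= b l)].
  apply: contraTN lt_bc => /forallP le_cb; rewrite -leqNgt !contractE.
  by apply: leq_sum => l /(implyP (le_cb l)).
by rewrite negb_forall => /existsP [l]; rewrite negb_imply -ltnNge => /andP [/eqP]; exists l.
Qed.

Lemma contract_lift (b : T) a :
  (a <= contract b)%MM -> exists2 b', (b' <= b)%MM & contract b' = a.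
Proof.
have [d] := ubnP (mdeg b); elim: d b => // d IHd b /ltnSE deg_b le_ab.
have [<-|ne_ab] := eqVneq (contract b) a; first by exists b => //; apply: lepm_refl.
have [i lt_ai] : exists i, a i < contract b i.
  apply/existsP; apply: contraNT ne_ab; rewrite negb_exists => /forallP le_ba.
  apply/eqP/mnmP => i; move/mnm_lepP: le_ab => /(_ i); have := le_ba i; lia.
have [|l bl] := @contract_ltP i 0%MM b; first by rewrite contract0 mnm0E; lia.
rewrite mnm0E lt0n -lep1mP => /submK Eb; move: (b - U_(l))%MM Eb => c <-{b} in ne_ab deg_b lt_ai le_ab *.
rewrite contractD contract1 bl in lt_ai le_ab.
have le_ac : (a <= contract c)%MM.
  apply/mnm_lepP => i'; move/mnm_lepP: le_ab => /(_ i'); move: lt_ai.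
  rewrite !mnmDE !mnm1E eqxx; have [<-|_] := eqVneq i i'; lia.
have [|b' le_b'c <-] := IHd c _ le_ac; first by move: deg_b; rewrite mdegD mdeg1; lia.
by exists b' => //; apply: lepm_trans le_b'c (lem_addr _ _).
Qed.

Lemma contract_le_eq (b' b : T) :
  (b' <= b)%MM -> (contract b <= contract b')%MM -> b' = b.
Proof.
move=> le_b'b /lem_leo /lemc_mdeg; rewrite !mdeg_contract.
rewrite -(submK le_b'b) mdegD => deg_le.
have /eqP : mdeg (b - b')%MM = 0 by lia.
by rewrite mdeg_eq0 => /eqP ->; rewrite add0m.
Qed.

Section MinimalGenerators.
Variable M : 'X_{1..n} -> Prop.

Definition expmon (b : T) := exists2 a, minimal M a & (a <= contract b)%MM.

Lemma minimal_expmon (b : T) : minimal expmon b <-> minimal M (contract b).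
Proof.
split=> [[[a minMa le_a] minb]|minMb].
  have [b' le_b'b E] := contract_lift le_a.
  suff -> : b = b' by rewrite E.
  by apply/esym/minb => //; exists a; rewrite // E; apply: lepm_refl.
split=> [|b' [a' minMa' le_a'] le_b'b]; first by exists (contract b); rewrite //; apply: lepm_refl.
apply: contract_le_eq => //.
suff <- : a' = contract b by [].
by apply: minMb.2; [case: minMa' | apply: lepm_trans le_a' (contract_le le_b'b)].
Qed.

End MinimalGenerators.

End Contraction.

Section ExpandOrder.
Variables (n : nat) (k : 'I_n -> nat).
Local Notation N := #|{: expvar k}|.
Local Notation T := 'X_{1..N}.
Local Notation contract := (@contract n k).

(* [contract b = a] forces [mdeg b = mdeg a]: the fiber is finite and found among the
   multinomials of degree at most [mdeg a]. *)
Definition fiber (a : 'X_{1..n}) : seq T :=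
  sort >=%O [seq b <- map val (enum {: 'X_{1..N < (mdeg a).+1}}) | contract b == a].

Definition expand_seq (s : seq 'X_{1..n}) : seq T := flatten (map fiber s).

Lemma mem_fiber a b : (b \in fiber a) = (contract b == a).
Proof.
rewrite mem_sort mem_filter; case: eqP => //= <-.
have deg_b : mdeg b < (mdeg (contract b)).+1 by rewrite mdeg_contract.
by apply/mapP; exists (BMultinom deg_b); rewrite ?mem_enum.
Qed.

Lemma uniq_fiber a : uniq (fiber a).
Proof. by rewrite sort_uniq filter_uniq // map_inj_uniq ?enum_uniq //; apply: val_inj. Qed.

Lemma mem_expand_seq s b : (b \in expand_seq s) = (contract b \in s).
Proof. by elim: s => [|a s IHs] //=; rewrite mem_cat IHs mem_fiber inE. Qed.

Lemma uniq_expand_seq s : uniq s -> uniq (expand_seq s).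
Proof.
elim: s => [|a s IHs] //= /andP [as_ us]; rewrite cat_uniq uniq_fiber IHs //= andbT.
apply/hasPn => b; rewrite mem_expand_seq mem_fiber => bs.
by apply: contraNneq as_ => <-.
Qed.

(* The witness is [v - x_l1 + x_l0] for some [l1 > l0] in the block of [l0]. *)
Lemma fiber_exchange (v w : T) : contract v = contract w -> (v < w)%O ->
  exists l0 v', [/\ v l0 < w l0, contract v' = contract v, (v < v')%O
                  & (v' <= v + U_(l0))%MM].
Proof.
move=> Evw lt_vw; have deg_vw : mdeg v = mdeg w by rewrite -!mdeg_contract Evw.
have [l0 eq_lt lt_l0] := ltmcP deg_vw lt_vw.
have [l1 bl1 lt_l1] : exists2 l1, var_block l1 = var_block l0 & w l1 < v l1.
  have [|l bl] := @contract_ltP _ k (var_block l0) w (v + U_(l0))%MM.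
    by rewrite contractD contract1 mnmDE mnm1E eqxx Evw addn1.
  by rewrite mnmDE mnm1E; have [<-|_] := eqVneq l0 l; [lia | rewrite addn0; exists l].
have lt_l01 : l0 < l1.
  case: ltngtP => // [/eq_lt E | /val_inj E]; move: lt_l1; first by rewrite E ltnn.
  by rewrite -E; lia.
have : (U_(l1) <= v)%MM by rewrite lep1mP; lia.
move=> /submK; move: (v - U_(l1))%MM => c Ev.
exists l0, (c + U_(l0))%MM; split=> //; rewrite -Ev.
- by rewrite !contractD !contract1 bl1.
- apply/ltmcP; first by rewrite !mdegD !mdeg1.
  have ne_l01 : l1 != l0 by rewrite neq_ltn lt_l01 orbT.
  exists l0 => [j lt_j|]; last by rewrite !mnmDE !mnm1E eqxx (negbTE ne_l01) addn0 addn1.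
  rewrite !mnmDE !mnm1E; have /negbTE -> : l0 != j by rewrite neq_ltn lt_j orbT.
  by have /negbTE -> : l1 != j by rewrite neq_ltn (ltn_trans lt_j lt_l01) orbT.
- by apply/mnm_lepP => j; rewrite !mnmDE; lia.
Qed.

Lemma lq_witness_fiber u pre v post w :
  fiber u = pre ++ v :: post -> w \in pre -> lq_witness pre v w.
Proof.
move=> Eu wpre.
have : pairwise >=%O (pre ++ v :: post).
  by rewrite -Eu -sorted_pairwise ?sort_sorted //; [apply: ge_total | apply: ge_trans].
rewrite pairwise_cat pairwise_cons => /and3P [/allrelP ge_pre _ /andP [ge_post _]].
have fiber_u x : (contract x == u) = (x \in pre ++ v :: post) by rewrite -Eu mem_fiber.
have /eqP cw : contract w == u by rewrite fiber_u mem_cat wpre.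
have /eqP cv : contract v == u by rewrite fiber_u mem_cat mem_head orbT.
have ne_wv : w != v.
  have := uniq_fiber u; rewrite Eu cat_uniq => /and3P [_ /hasPn /(_ v (mem_head _ _)) vpre _].
  by apply: contraNneq vpre => <-.
have lt_vw : (v < w)%O by rewrite lt_neqAle eq_sym ne_wv; apply: ge_pre wpre (mem_head _ _).
have [l0 [v' [lt_l0 cv' lt_vv' le_v']]] := fiber_exchange (etrans cv (esym cw)) lt_vw.
exists l0; split=> //; exists v' => //.
have : v' \in pre ++ v :: post by rewrite -fiber_u cv' cv.
rewrite mem_cat inE (gt_eqF lt_vv') /= => /orP [//|/(allP ge_post) /=].
by rewrite leNgt lt_vv'.
Qed.

Lemma lq_witness_expand s u v w : lin_quot s u -> contract v = u ->
  w \in expand_seq s -> lq_witness (expand_seq s) v w.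
Proof.
move=> Hsu cv; rewrite mem_expand_seq => /Hsu [i [lt_i [a' a's le_a']]].
have [|l bl lt_l] := @contract_ltP _ k i v w; first by rewrite cv.
have : (a' <= contract (v + U_(l)))%MM by rewrite contractD contract1 cv bl.
move=> /contract_lift [w' le_w' cw']; exists l; split=> //.
by exists w' => //; rewrite mem_expand_seq cw'.
Qed.

Lemma lq_seq_expand s : lq_seq s -> lq_seq (expand_seq s).
Proof.
elim/last_ind: s => [_ [|x pre] post u //|s u IHs /lq_seq_rcons [/IHs Ls Hsu]].
rewrite /expand_seq map_rcons -cats1 flatten_cat /= cats0.
apply: lq_seq_cat => // pre v post Eu w.
have cv : contract v = u by apply/eqP; rewrite -mem_fiber Eu mem_cat mem_head orbT.
rewrite mem_cat => /orP [/(lq_witness_expand Hsu cv) | /(lq_witness_fiber Eu)];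
  by apply: lq_witness_sub => x; rewrite mem_cat => ->; rewrite ?orbT.
Qed.

Lemma has_lq_order_expand (M : 'X_{1..n} -> Prop) :
  has_lq_order M -> has_lq_order (expmon (k:=k) M).
Proof.
move=> [s [us Hs Ls]]; exists (expand_seq s); split.
- exact: uniq_expand_seq.
- by move=> b; rewrite mem_expand_seq Hs minimal_expmon.
- exact: lq_seq_expand.
Qed.

End ExpandOrder.

Section HeadVariables.
Variables (n : nat) (k : 'I_n -> nat).
Hypothesis k_gt0 : forall i, 0 < k i.
Local Notation N := #|{: expvar k}|.
Local Notation T := 'X_{1..N}.
Local Notation contract := (@contract n k).

Definition head_var (i : 'I_n) : 'I_N := xvar_idx (Ordinal (k_gt0 i)).

Definition embed_head (a : 'X_{1..n}) : T :=
  [multinom if l == head_var (var_block l) then a (var_block l) else 0 | l < N].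

Definition head_part (b : T) : 'X_{1..n} := [multinom b (head_var i) | i < n].

Definition head_supported (b : T) :=
  [forall l, (b l != 0) ==> (l == head_var (var_block l))].

Lemma var_block_head i : var_block (head_var i) = i.
Proof. exact: var_block_idx. Qed.

Lemma eq_head_var i l :
  (head_var i == l) = (l == head_var (var_block l)) && (var_block l == i).
Proof.
apply/eqP/andP => [<-|[/eqP El /eqP <-]]; last exact/esym.
by rewrite var_block_head !eqxx.
Qed.

Lemma embed_head_head a i : embed_head a (head_var i) = a i.
Proof. by rewrite mnmE var_block_head eqxx. Qed.

Lemma embed_head_supp a l : embed_head a l != 0 -> exists i, l = head_var i.
Proof. by rewrite mnmE; case: ifP => [/eqP El _|_]; [exists (var_block l) | rewrite eqxx]. Qed.

Lemma embed_head_le a a' : (embed_head a <= embed_head a')%MM -> (a <= a')%MM.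
Proof.
by move=> /mnm_lepP le_aa'; apply/mnm_lepP => i; have := le_aa' (head_var i); rewrite !embed_head_head.
Qed.

Lemma embed_headD1 a i : embed_head (a + U_(i))%MM = (embed_head a + U_(head_var i))%MM.
Proof.
apply/mnmP => l; rewrite [RHS]mnmDE !mnmE eq_head_var.
by case: (l == _); rewrite // eq_sym.
Qed.

Lemma head_supported_embed a : head_supported (embed_head a).
Proof. by apply/forallP => l; rewrite mnmE; case: ifP; rewrite ?implybT ?eqxx. Qed.

Lemma embed_head_partK b : head_supported b -> embed_head (head_part b) = b.
Proof.
move=> /forallP b_head; apply/mnmP => l; rewrite !mnmE.
case: ifP => [/eqP <- //|ne_l]; have := b_head l; rewrite ne_l.
by case: (b l) => // m; rewrite implyTb => /eqP.
Qed.

Lemma head_part_embedK a : head_part (embed_head a) = a.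
Proof. by apply/mnmP => i; rewrite mnmE embed_head_head. Qed.

Lemma contract_embed_head a : contract (embed_head a) = a.
Proof.
apply/mnmP => i; rewrite contractE (bigD1 (head_var i)) /=; last by rewrite var_block_head.
rewrite embed_head_head big1 ?addn0 // => l /andP [/eqP bl ne_l].
apply/eqP; apply: contraNT ne_l => /embed_head_supp [i' El].
by rewrite -bl El var_block_head.
Qed.

Lemma head_supported_le x y : (x <= y)%MM -> head_supported y -> head_supported x.
Proof.
move=> /mnm_lepP le_xy /forallP y_head; apply/forallP => l; apply/implyP => x_l.
by apply: (implyP (y_head l)); move: x_l (le_xy l); case: (x l); case: (y l).
Qed.

Lemma head_supportedD1 v w i : head_supported v -> head_supported w -> v i < w i ->
  head_supported (v + U_(i))%MM.
Proof.
move=> /forallP v_head /forallP w_head lt_i; apply/forallP => l; apply/implyP.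
rewrite mnmDE mnm1E; have [<- _|_] := eqVneq i l; last by rewrite addn0; apply/implyP.
by apply: (implyP (w_head i)); case: (w i) lt_i.
Qed.

Lemma has_lq_order_restrict (M : 'X_{1..n} -> Prop) :
  has_lq_order (expmon (k:=k) M) -> has_lq_order M.
Proof.
move=> [S [uS HS LS]]; set W := filter head_supported S.
have embedK : {in W, cancel head_part embed_head}.
  by move=> b; rewrite mem_filter => /andP [/embed_head_partK].
exists (map head_part W); split.
- by rewrite (map_inj_in_uniq (can_in_inj embedK)) filter_uniq.
- move=> a; split=> [/mapP [b bW ->]|minMa].
    move: (bW); rewrite mem_filter => /andP [_ /HS].
    by rewrite minimal_expmon -{1}(embedK b bW) contract_embed_head.
  apply/mapP; exists (embed_head a); last by rewrite head_part_embedK.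
  by rewrite mem_filter head_supported_embed HS minimal_expmon contract_embed_head.
- apply: (@lq_seq_map _ _ embed_head head_var embed_head_le embed_headD1 _ embed_head_head).
    by move=> a l /embed_head_supp.
  have -> : map embed_head (map head_part W) = W.
    by rewrite -map_comp -[RHS]map_id; apply/eq_in_map => b /embedK.
  exact: lq_seq_filter head_supported_le head_supportedD1 LS.
Qed.

End HeadVariables.

Section ExpansionIdeal.
Variables (R : comNzRingType) (n : nat) (k : 'I_n -> nat).
Local Notation N := #|{: expvar k}|.
Local Notation T := 'X_{1..N}.
Local Notation contract := (@contract n k).

Lemma PidealP i f : Pideal (R:=R) i f <-> supported_in (fun m => 0 < contract m i) f.
Proof.
rewrite /Pideal (@ideal_gen_ext _ _ _ (monomial_gens (fun m => exists j, m = U_(@xvar_idx n k i j)%MM))).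
  rewrite ideal_gen_monomialsP; apply: supported_in_ext => m; split.
    move=> [t [j ->]]; rewrite lep1mP -lt0n => m_j.
    by have := leq_trans m_j (leq_contract m (xvar_idx j)); rewrite var_block_idx.
  move=> pos_m; have [|l <-] := @contract_ltP _ k i 0%MM m; first by rewrite contract0 mnm0E.
  rewrite mnm0E lt0n -lep1mP => le_lm.
  have [j El] := xvar_idx_block l; exists U_(l)%MM => //.
  by exists j; rewrite {1}El.
move=> g; split=> [[j ->]|[m [[j ->] ->]]]; last by exists j.
by exists U_(xvar_idx j)%MM; split=> //; exists j.
Qed.

Lemma ideal_pow_PidealP i e f :
  ideal_pow (Pideal (R:=R) i) e f <-> supported_in (fun m => e <= contract m i) f.
Proof.
elim: e f => [|e IHe] f; first by split=> [_ m _ //|_]; apply: unit_idealT.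
rewrite /ideal_pow iterS -/(ideal_pow _ e) (ideal_mul_ext _ (@PidealP i) IHe).
rewrite ideal_mul_supportedP; apply: supported_in_ext => m; split.
  move=> [x [y [pos_x le_y /contract_le /mnm_lepP /(_ i)]]].
  by rewrite contractD mnmDE; lia.
move=> le_m; have [|l bl] := @contract_ltP _ k i 0%MM m; first by rewrite contract0 mnm0E; lia.
rewrite mnm0E lt0n -lep1mP => /submK Em.
exists U_(l)%MM, (m - U_(l))%MM; split.
- by rewrite contract1 bl mnm1E eqxx.
- by move: le_m; rewrite -{1}Em contractD contract1 bl mnmDE mnm1E eqxx; lia.
- by rewrite addmC Em; apply: lepm_refl.
Qed.

Definition block_part i (m : T) : T :=
  [multinom if var_block l == i then m l else 0 | l < N].

Lemma Pprod_foldP (a : 'X_{1..n}) (r : seq 'I_n) f : uniq r ->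
  foldr (fun i J => ideal_mul (ideal_pow (Pideal (R:=R) i) (a i)) J)
        (unit_ideal (R:=R) (n:=N)) r f
  <-> supported_in (fun m => forall i, i \in r -> a i <= contract m i) f.
Proof.
elim: r f => [|i r IHr] f /=; first by split=> [_ m _ i //|_]; apply: unit_idealT.
move=> /andP [ir ur]; rewrite (ideal_mul_ext _ (@ideal_pow_PidealP i (a i)) (IHr ^~ ur)).
rewrite ideal_mul_supportedP; apply: supported_in_ext => m; split.
  move=> [x [y [le_x le_y /contract_le /mnm_lepP le_m]]] i'.
  rewrite inE => /orP [/eqP ->|i'r]; apply: leq_trans (le_m _).
    by rewrite contractD mnmDE; apply: leq_trans le_x (leq_addr _ _).
  by rewrite contractD mnmDE; apply: leq_trans (le_y _ i'r) (leq_addl _ _).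
have le_part : (block_part i m <= m)%MM by apply/mnm_lepP => l; rewrite mnmE; case: ifP.
have part_i : contract (block_part i m) i = contract m i.
  by rewrite !contractE; apply: eq_bigr => l /eqP bl; rewrite mnmE bl eqxx.
have part_r i' : i' \in r -> contract (block_part i m) i' = 0.
  move=> i'r; rewrite contractE big1 // => l /eqP bl; rewrite mnmE bl.
  by case: eqP => // Ei; move: ir; rewrite -Ei i'r.
move=> le_m; exists (block_part i m), (m - block_part i m)%MM; split.
- by rewrite part_i; apply: le_m; rewrite mem_head.
- move=> i' i'r; have := le_m i'; rewrite inE i'r orbT => /(_ isT).
  by rewrite -{1}(submK le_part) contractD mnmDE part_r ?addn0.
- by rewrite addmC submK //; apply: lepm_refl.
Qed.

Lemma PprodP a f : Pprod (R:=R) (k:=k) a f <-> supported_in (fun m => (a <= contract m)%MM) f.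
Proof.
rewrite /Pprod Pprod_foldP ?enum_uniq //; apply: supported_in_ext => m.
by split=> [le_a|/mnm_lepP le_a i _]; [apply/mnm_lepP => i; apply: le_a; rewrite mem_enum | apply: le_a].
Qed.

Variable I : {mpoly R[n]} -> Prop.
Local Notation M := (fun a => I 'X_[a]).

Lemma expansionP f : expansion k I f <-> supported_in (expmon (k:=k) M) f.
Proof.
have expmon_up : up_closed (expmon (k:=k) M).
  by move=> b b' [a minMa le_a] /contract_le le_b; exists a => //; apply: lepm_trans le_b.
split.
  apply: supported_in_ideal_gen => // g [a [/mingenP minMa /PprodP Pg]] m /Pg.
  by exists a.
move=> /(ideal_gen_up_closedP _ expmon_up); apply: ideal_gen_min => g [b [[a minMa le_a] ->]].
by apply: ideal_gen_in; exists a; split; [apply/mingenP | apply/PprodP/supported_inX].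
Qed.

Lemma expansionX b : expansion k I 'X_[b] <-> expmon (k:=k) M b.
Proof. by rewrite expansionP supported_inX. Qed.

End ExpansionIdeal.

Theorem theorem1p7 (K : fieldType) (n : nat) (k : 'I_n -> nat)
  (I : {mpoly K[n]} -> Prop) :
  (forall i, 0 < k i)%N ->
  monomial_ideal I ->
  has_linear_quotients I <-> has_linear_quotients (expansion k I).
Proof.
move=> k_gt0 _.
rewrite !has_linear_quotientsP (has_lq_order_ext (expansionX (k:=k) I)).
by split; [apply: has_lq_order_expand | apply: has_lq_order_restrict].
Qed.
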